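(* Let $a_1,a_2,\ldots,a_W$ with $a_t\in\{1,2,\ldots,n\}$ be an access sequence of length $W$. For $t\ge 0$ and $i\in\{1,\dots,n\}$ let $w_i^{(t)}$ be the number of indices $s\le t$ with $a_s=i$, let $w_i=w_i^{(W)}$, and let $H=\sum_{i:\,w_i>0}\frac{w_i}{W}\log\frac{W}{w_i}$ be the entropy of the full access sequence. Then $$\sum_{t=1}^W \log \frac{t}{\max\left(w^{(t-1)}_{a_t},\,1\right)} \le W\cdot H + 2W.$$
   Context: $\log$ denotes the binary logarithm. *)

From Stdlib Require Import Reals Lra Lia Arith.
Open Scope R_scope.

Definition log2 (x : R) : R := ln x / ln 2.

Fixpoint cnt (a : nat -> nat) (i t : nat) : nat :=
  match t with
  | O => O
  | S t' => (cnt a i t' + (if Nat.eqb (a (S t')) i then 1 else 0))%nat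
  end.

Fixpoint sumR (f : nat -> R) (m : nat) : R :=
  match m with
  | O => 0
  | S m' => sumR f m' + f (S m')
  end.

Definition entropy (a : nat -> nat) (n W : nat) : R :=
  sumR (fun i =>
          let w := cnt a i W in
          if Nat.ltb 0 w then (INR w / INR W) * log2 (INR W / INR w) else 0) n.

(* Multiplied by ln 2, the left-hand side is ln W! - Σ_i ln (w_i - 1)!: the t-th term
   contributes ln t, and the terms with a_t = i contribute ln 1, ln 1, ln 2, ..., ln (w_i - 1).
   The right-hand side is W ln W - Σ_i w_i ln w_i + 2 W ln 2.  Telescoping the estimates
   1/(x+1) <= ln (x+1) - ln x <= 1/x gives ln W! <= W ln W - W/2 + 1/2 and
   k ln k - ln (k-1)! <= k - 1 + ln k <= 3k/2 - 1 for k >= 1; summing the latter over the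
   symbols (at least one of which occurs) leaves a slack of W - 1/2 <= 2 W ln 2. *)
From Stdlib Require Import Reals Lra Lia.
Open Scope R_scope.

Lemma sumR_S f m : sumR f (S m) = sumR f m + f (S m).
Proof. reflexivity. Qed.

Lemma sumR_ext_in f g m :
  (forall i, (1 <= i <= m)%nat -> f i = g i) -> sumR f m = sumR g m.
Proof.
  induction m as [|m IH]; intros Hfg; simpl; [reflexivity|].
  rewrite IH, (Hfg (S m)); [reflexivity | lia | intros; apply Hfg; lia].
Qed.

Lemma sumR_plus f g m : sumR (fun i => f i + g i) m = sumR f m + sumR g m.
Proof. induction m as [|m IH]; simpl; [lra | rewrite IH; lra]. Qed.

Lemma sumR_minus f g m : sumR (fun i => f i - g i) m = sumR f m - sumR g m.
Proof. induction m as [|m IH]; simpl; [lra | rewrite IH; lra]. Qed.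

Lemma sumR_scal c f m : sumR (fun i => c * f i) m = c * sumR f m.
Proof. induction m as [|m IH]; simpl; [lra | rewrite IH; lra]. Qed.

Lemma sumR_const c m : sumR (fun _ => c) m = INR m * c.
Proof. induction m as [|m IH]; simpl sumR; [simpl; lra | rewrite IH, S_INR; lra]. Qed.

Lemma sumR_single j c m : (1 <= j <= m)%nat ->
  sumR (fun i => if Nat.eqb j i then c else 0) m = c.
Proof.
  induction m as [|m IH]; intros Hj; [lia|]. rewrite sumR_S; cbv beta.
  destruct (Nat.eqb_spec j (S m)) as [->|Hne].
  - rewrite (sumR_ext_in _ (fun _ => 0)), sumR_const; [lra|].
    intros i Hi. destruct (Nat.eqb_spec (S m) i); [lia | reflexivity].
  - rewrite IH by lia. lra.
Qed.

Lemma sumR_le f g m :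
  (forall i, (1 <= i <= m)%nat -> f i <= g i) -> sumR f m <= sumR g m.
Proof.
  induction m as [|m IH]; intros Hfg; simpl; [lra|].
  apply Rplus_le_compat; [apply IH; intros; apply Hfg | apply Hfg]; lia.
Qed.

Lemma sumR_le_sub f g m j c : (1 <= j <= m)%nat ->
  (forall i, (1 <= i <= m)%nat -> f i <= g i) -> f j <= g j - c ->
  sumR f m <= sumR g m - c.
Proof.
  induction m as [|m IH]; intros Hj Hfg Hfgj; [lia|]. simpl.
  destruct (Nat.eq_dec j (S m)) as [->|Hne].
  - assert (sumR f m <= sumR g m) by (apply sumR_le; intros; apply Hfg; lia). lra.
  - assert (sumR f m <= sumR g m - c) by (apply IH; [lia | intros i Hi; apply Hfg; lia | exact Hfgj]).
    assert (f (S m) <= g (S m)) by (apply Hfg; lia). lra.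
Qed.

Lemma cnt_S_eq a i t :
  cnt a i (S t) = (cnt a i t + (if Nat.eqb (a (S t)) i then 1 else 0))%nat.
Proof. reflexivity. Qed.

Lemma cnt_self_pos a s t : (1 <= s <= t)%nat -> (1 <= cnt a (a s) t)%nat.
Proof.
  induction t as [|t IH]; intros Hs; [lia|]. rewrite cnt_S_eq.
  destruct (Nat.eq_dec s (S t)) as [->|Hne].
  - rewrite Nat.eqb_refl. lia.
  - specialize (IH ltac:(lia)). lia.
Qed.

Lemma sumR_by_symbol (f : nat -> R) a n T :
  (forall t, (1 <= t <= T)%nat -> (1 <= a t <= n)%nat) ->
  sumR (fun t => f (cnt a (a t) (t - 1))) T
  = sumR (fun i => sumR (fun j => f (j - 1)%nat) (cnt a i T)) n.
Proof.
  induction T as [|T IH]; intros Ha.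
  - symmetry. rewrite (sumR_ext_in _ (fun _ => 0)), sumR_const; simpl; [lra | reflexivity].
  - assert (Hstep : forall i, sumR (fun j => f (j - 1)%nat) (cnt a i (S T))
       = sumR (fun j => f (j - 1)%nat) (cnt a i T)
         + (if Nat.eqb (a (S T)) i then f (cnt a (a (S T)) T) else 0)).
    { intros i. rewrite cnt_S_eq.
      destruct (Nat.eqb_spec (a (S T)) i) as [<-|_].
      - rewrite Nat.add_1_r, sumR_S, Nat.sub_succ, Nat.sub_0_r. reflexivity.
      - rewrite Nat.add_0_r. lra. }
    rewrite (sumR_ext_in (fun i => sumR _ (cnt a i (S T))) _ n (fun i _ => Hstep i)).
    rewrite sumR_plus, sumR_single, <- IH by (intros; apply Ha; lia).
    rewrite sumR_S, Nat.sub_succ, Nat.sub_0_r. reflexivity.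
Qed.

Lemma sumR_cnt a n T :
  (forall t, (1 <= t <= T)%nat -> (1 <= a t <= n)%nat) ->
  sumR (fun i => INR (cnt a i T)) n = INR T.
Proof.
  intros Ha.
  rewrite (sumR_ext_in _ (fun i => sumR (fun _ => 1) (cnt a i T)))
    by (intros; rewrite sumR_const; lra).
  rewrite <- (sumR_by_symbol (fun _ => 1) a n T Ha), sumR_const. lra.
Qed.

Lemma ln_sub_le x y : 0 < x -> 0 < y -> ln x - ln y <= x / y - 1.
Proof.
  intros Hx Hy.
  assert (Hxy : 0 < x / y) by (apply Rdiv_lt_0_compat; assumption).
  pose proof (exp_ineq1_le (ln (x / y))) as Hexp. rewrite exp_ln in Hexp by exact Hxy.
  unfold Rdiv in *. rewrite ln_mult, ln_Rinv in Hexp by (auto; apply Rinv_0_lt_compat; auto).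
  lra.
Qed.

Lemma ln_le_half x : 0 < x -> ln x <= x / 2.
Proof.
  intros Hx. pose proof (ln_sub_le x 2 Hx ltac:(lra)).
  pose proof (ln_sub_le 2 1 ltac:(lra) ltac:(lra)). rewrite ln_1 in *. lra.
Qed.

Lemma ln_succ_sub_le x : 0 < x -> x * (ln (x + 1) - ln x) <= 1.
Proof.
  intros Hx.
  assert (Hd : ln (x + 1) - ln x <= / x).
  { replace (/ x) with ((x + 1) / x - 1) by (field; lra). apply ln_sub_le; lra. }
  apply Rle_trans with (x * / x); [apply Rmult_le_compat_l; lra | right; field; lra].
Qed.

Lemma ln_succ_sub_ge x : 1 <= x -> 1 / 2 <= x * (ln (x + 1) - ln x).
Proof.
  intros Hx.
  assert (Hd : / (x + 1) <= ln (x + 1) - ln x).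
  { pose proof (ln_sub_le x (x + 1) ltac:(lra) ltac:(lra)) as Hsub.
    replace (x / (x + 1) - 1) with (- / (x + 1)) in Hsub by (field; lra). lra. }
  assert (Hinv : / (x + 1) <= / 2) by (apply Rinv_le_contravar; lra).
  apply Rle_trans with (x * / (x + 1)); [| apply Rmult_le_compat_l; lra].
  replace (x * / (x + 1)) with (1 - / (x + 1)) by (field; lra). lra.
Qed.

Lemma sumR_ln_le W : (1 <= W)%nat ->
  sumR (fun t => ln (INR t)) W <= INR W * ln (INR W) - INR W / 2 + 1 / 2.
Proof.
  intros HW. destruct W as [|W]; [lia|]. clear HW.
  induction W as [|W IH].
  - simpl. rewrite ln_1. lra.
  - change (sumR (fun t => ln (INR t)) (S (S W)))
      with (sumR (fun t => ln (INR t)) (S W) + ln (INR (S (S W)))).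
    rewrite (S_INR (S W)) in *. set (x := INR (S W)) in *.
    assert (Hx : 1 <= x) by (unfold x; rewrite S_INR; pose proof (pos_INR W); lra).
    pose proof (ln_succ_sub_ge x Hx). nra.
Qed.

Definition lnfact_pred (k : nat) : R := sumR (fun j => ln (INR (Nat.max (j - 1) 1))) k.

Lemma lnfact_pred_S k : lnfact_pred (S k) = lnfact_pred k + ln (INR (Nat.max k 1)).
Proof. unfold lnfact_pred. rewrite sumR_S, Nat.sub_succ, Nat.sub_0_r. reflexivity. Qed.

Lemma lnfact_pred_deficit k : (1 <= k)%nat ->
  INR k * ln (INR k) - lnfact_pred k <= INR k - 1 + ln (INR k).
Proof.
  intros Hk. destruct k as [|k]; [lia|]. clear Hk.
  induction k as [|k IH].
  - rewrite lnfact_pred_S. unfold lnfact_pred. simpl. rewrite ln_1. lra.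
  - rewrite (lnfact_pred_S (S k)), Nat.max_l by lia.
    rewrite (S_INR (S k)) in *. set (x := INR (S k)) in *.
    assert (Hx : 1 <= x) by (unfold x; rewrite S_INR; pose proof (pos_INR k); lra).
    pose proof (ln_succ_sub_le x ltac:(lra)). nra.
Qed.

Lemma lnfact_pred_deficit_half k : (1 <= k)%nat ->
  INR k * ln (INR k) - lnfact_pred k <= 3 / 2 * INR k - 1.
Proof.
  intros Hk. pose proof (lnfact_pred_deficit k Hk).
  pose proof (ln_le_half (INR k) ltac:(apply (lt_INR 0); lia)). lra.
Qed.

Lemma sum_log2_eq n W a :
  (forall t, (1 <= t <= W)%nat -> (1 <= a t <= n)%nat) ->
  sumR (fun t => log2 (INR t / INR (Nat.max (cnt a (a t) (t - 1)) 1))) W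
  = / ln 2 * (sumR (fun t => ln (INR t)) W - sumR (fun i => lnfact_pred (cnt a i W)) n).
Proof.
  intros Ha. unfold lnfact_pred.
  rewrite <- (sumR_by_symbol (fun c => ln (INR (Nat.max c 1))) a n W Ha).
  rewrite <- sumR_minus, <- sumR_scal. apply sumR_ext_in. intros t Ht.
  assert (0 < INR t) by (apply (lt_INR 0); lia).
  assert (0 < INR (Nat.max (cnt a (a t) (t - 1)) 1)) by (apply (lt_INR 0); lia).
  unfold log2, Rdiv. rewrite ln_mult, ln_Rinv by (auto; apply Rinv_0_lt_compat; auto).
  ring.
Qed.

Lemma entropy_eq n W a : (1 <= W)%nat ->
  (forall t, (1 <= t <= W)%nat -> (1 <= a t <= n)%nat) ->
  INR W * entropy a n W
  = / ln 2 * (INR W * ln (INR W)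
              - sumR (fun i => INR (cnt a i W) * ln (INR (cnt a i W))) n).
Proof.
  intros HW Ha.
  assert (Hl2 : 0 < ln 2) by (rewrite <- ln_1; apply ln_increasing; lra).
  assert (HWpos : 0 < INR W) by (apply (lt_INR 0); lia).
  unfold entropy. rewrite <- sumR_scal.
  rewrite (sumR_ext_in _ (fun i => / ln 2 * (ln (INR W) * INR (cnt a i W)
                                         - INR (cnt a i W) * ln (INR (cnt a i W))))).
  - rewrite sumR_scal, sumR_minus, sumR_scal, (sumR_cnt a n W Ha). ring.
  - intros i _. cbv zeta. destruct (Nat.ltb_spec 0 (cnt a i W)) as [Hpos|Hzero].
    + assert (0 < INR (cnt a i W)) by (apply (lt_INR 0); lia).
      unfold log2, Rdiv. rewrite ln_mult, ln_Rinv by (auto; apply Rinv_0_lt_compat; auto).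
      field. lra.
    + replace (cnt a i W) with 0%nat by lia. simpl. ring.
Qed.

Theorem lemma1 (n W : nat) (a : nat -> nat)
  (Ha : forall t, (1 <= t <= W)%nat -> (1 <= a t <= n)%nat) :
  sumR (fun t => log2 (INR t / INR (Nat.max (cnt a (a t) (t - 1)) 1))) W
  <= INR W * entropy a n W + 2 * INR W.
Proof.
  destruct (Nat.eq_0_gt_0_cases W) as [->|HW]; [simpl; lra|].
  rewrite (sum_log2_eq n), entropy_eq by assumption.
  set (F := sumR (fun t => ln (INR t)) W).
  set (C := sumR (fun i => lnfact_pred (cnt a i W)) n).
  set (X := sumR (fun i => INR (cnt a i W) * ln (INR (cnt a i W))) n).
  assert (HF : F <= INR W * ln (INR W) - INR W / 2 + 1 / 2) by exact (sumR_ln_le W HW).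
  assert (HXC : X - C <= 3 / 2 * INR W - 1).
  { unfold X, C. rewrite <- sumR_minus, <- (sumR_cnt a n W Ha), <- sumR_scal.
    apply (sumR_le_sub _ _ n (a 1%nat)); [apply Ha; lia | intros i _ |].
    - destruct (cnt a i W) as [|k].
      + unfold lnfact_pred. simpl. lra.
      + pose proof (lnfact_pred_deficit_half (S k) ltac:(lia)). lra.
    - apply lnfact_pred_deficit_half, cnt_self_pos. lia. }
  assert (Hslack : F - C - (INR W * ln (INR W) - X) <= 2 * INR W * ln 2).
  { pose proof ln_lt_2. assert (1 <= INR W) by (apply (le_INR 1); lia). nra. }
  assert (Hl2 : 0 < ln 2) by (pose proof ln_lt_2; lra).
  replace (/ ln 2 * (F - C))
    with (/ ln 2 * (INR W * ln (INR W) - X) + / ln 2 * (F - C - (INR W * ln (INR W) - X)))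
    by ring.
  apply Rplus_le_compat_l.
  apply Rle_trans with (/ ln 2 * (2 * INR W * ln 2)).
  - apply Rmult_le_compat_l; [apply Rlt_le, Rinv_0_lt_compat |]; assumption.
  - right. field. lra.
Qed.
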